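(* Let $X\in Ob(\mathscr C)$. Consider the functors \begin{equation*} \mathcal H_X:Vect_K\longrightarrow {^\mathscr C}Ctr,\quad U\mapsto \mathcal H_X^U, \qquad\qquad ev_X:{^\mathscr C}Ctr\longrightarrow Vect_K,\quad \mathcal M\mapsto \mathcal M(X). \end{equation*} Then $(\mathcal H_X,ev_X)$ is a pair of adjoint functors, i.e. there are natural isomorphisms ${^\mathscr C}Ctr(\mathcal H_X^U,\mathcal M)\cong Vect_K(U,\mathcal M(X))$ for $U\in Vect_K$, $\mathcal M\in {^\mathscr C}Ctr$.
   Context: $K$ is a field and $Vect_K$ the category of $K$-vector spaces; for vector spaces $U',U$ we write $(U',U):=Hom_K(U',U)$. A coalgebra $\mathscr C$ with several objects is a small category enriched over $Vect_K^{op}$: a set $Ob(\mathscr C)$, vector spaces $\mathscr C(X,Y)$, and linear maps $\delta_{XYZ}:\mathscr C(X,Z)\to \mathscr C(Y,Z)\otimes \mathscr C(X,Y)$, $\epsilon_X:\mathscr C(X,X)\to K$ satisfying coassociativity and counit conditions. A left $\mathscr C$-contramodule $\mathcal M$ consists of vector spaces $\mathcal M(X)$, $X\in Ob(\mathscr C)$, and maps $\pi_{XY}:(\mathscr C(X,Y),\mathcal M(Y))\to \mathcal M(X)$ such that $\pi_{XZ}\circ(\delta_{XYZ},\mathcal M(Z))=\pi_{XY}\circ(\mathscr C(X,Y),\pi_{YZ})$ as maps $(\mathscr C(X,Y),(\mathscr C(Y,Z),\mathcal M(Z)))\cong(\mathscr C(Y,Z)\otimes\mathscr C(X,Y),\mathcal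 M(Z))\to\mathcal M(X)$, and $\pi_{XX}\circ(\epsilon_X,\mathcal M(X))=id$ (using $\mathcal M(X)\cong(K,\mathcal M(X))$). Morphisms are families of linear maps $\phi(X)$ with $\phi(X)\circ\pi_{XY}=\pi_{XY}\circ(\mathscr C(X,Y),\phi(Y))$; the category is ${^\mathscr C}Ctr$. For $U\in Vect_K$ and $X\in Ob(\mathscr C)$, $\mathcal H_X^U$ is the contramodule with $\mathcal H_X^U(Y):=(\mathscr C(Y,X),U)$ and structure maps $(\mathscr C(Y,Z),(\mathscr C(Z,X),U))\cong(\mathscr C(Z,X)\otimes\mathscr C(Y,Z),U)\xrightarrow{(\delta_{YZX},U)}(\mathscr C(Y,X),U)$. *)

From HB Require Import structures.
From mathcomp Require Import all_boot all_algebra.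
From mathcomp Require Import boolp functions.
From Stdlib Require Import ClassicalEpsilon.

Set Implicit Arguments.
Unset Strict Implicit.
Unset Printing Implicit Defensive.
Import GRing.Theory.
Local Open Scope ring_scope.

Section HomSpace.
Variables (K : fieldType) (U V : lmodType K).

Definition linb : {pred U -> V} := fun f => `[< linear f >].

Lemma linb_closed : subsemimod_closed linb.
Proof.
split; first split.
- apply/asboolP => a x y /=; by rewrite !scaler0 add0r.
- move=> f g /asboolP Hf /asboolP Hg; apply/asboolP => a x y.
  change (f (a *: x + y) + g (a *: x + y) = a *: (f x + g x) + (f y + g y)).
  by rewrite Hf Hg scalerDr addrACA.
- move=> k f /asboolP Hf; apply/asboolP => a x y.
  change (k *: f (a *: x + y) = a *: (k *: f x) + k *: f y).
  by rewrite Hf scalerDr !scalerA mulrC.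
Qed.

HB.instance Definition _ := GRing.isSubSemiModClosed.Build K (U -> V) linb linb_closed.

Record VHom := MkHom { homf :> U -> V; homP : homf \in linb }.
HB.instance Definition _ := [isSub for homf].
HB.instance Definition _ := [Choice of VHom by <:].
HB.instance Definition _ := [SubChoice_isSubLmodule of VHom by <:].

End HomSpace.

Arguments MkHom {K U V} homf homP.

Section HomFacts.
Variables (K : fieldType).

Lemma homlin (U V : lmodType K) (f : VHom U V) : linear f.
Proof. exact: (asboolP _ (homP f)). Qed.

Lemma homD (U V : lmodType K) (f : VHom U V) x y : f (x + y) = f x + f y.
Proof. by have := homlin f 1 x y; rewrite scale1r => ->; rewrite scale1r. Qed.

Lemma hom0 (U V : lmodType K) (f : VHom U V) : f 0 = 0.
Proof. by apply: (addrI (f 0)); rewrite -homD !addr0. Qed.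

Lemma homZ (U V : lmodType K) (f : VHom U V) a x : f (a *: x) = a *: f x.
Proof. by have := homlin f a x 0; rewrite !addr0 hom0 addr0. Qed.

Definition mkhom (U V : lmodType K) (f : U -> V) (H : linear f) : VHom U V :=
  MkHom f (introT (asboolP _) H).

Lemma comp_lin (A B D : lmodType K) (g : VHom B D) (f : VHom A B) : linear (g \o f).
Proof. by move=> a x y /=; rewrite homD homZ homD homZ. Qed.
Definition hcomp (A B D : lmodType K) (g : VHom B D) (f : VHom A B) : VHom A D :=
  mkhom (comp_lin g f).

End HomFacts.

(* Concrete model of U (x) V : the finite sums  sum_i u_i (x) v_i, realised as
   bilinear forms on U^* x V^*  via  (u (x) v)(phi, psi) = phi u * psi v.      *)
Section Tensor.
Variables (K : fieldType) (A B : lmodType K).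

Definition Dual (U : lmodType K) := VHom U K^o.

Definition tensb : {pred Dual A -> Dual B -> K^o} := fun t =>
  `[< exists s : seq (A * B),
        t = fun (phi : Dual A) (psi : Dual B) => \sum_(p <- s) phi p.1 * psi p.2 >].

Lemma tensb_closed : subsemimod_closed tensb.
Proof.
split; first split.
- apply/asboolP; exists [::]; apply/funext => phi; apply/funext => psi.
  by rewrite big_nil.
- move=> t t' /asboolP [s ->] /asboolP [s' ->]; apply/asboolP; exists (s ++ s').
  by apply/funext => phi; apply/funext => psi; rewrite big_cat.
- move=> k t /asboolP [s ->]; apply/asboolP.
  exists (map (fun p => (k *: p.1, p.2)) s).
  apply/funext => phi; apply/funext => psi; rewrite big_map.
  change (k *: \sum_(p <- s) phi p.1 * psi p.2 =
          \sum_(p <- s) phi (k *: p.1) * psi p.2).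
  rewrite scaler_sumr; apply: eq_bigr => p _.
  by rewrite homZ; change (k * (phi p.1 * psi p.2) = k * phi p.1 * psi p.2); rewrite mulrA.
Qed.

HB.instance Definition _ :=
  GRing.isSubSemiModClosed.Build K (Dual A -> Dual B -> K^o) tensb tensb_closed.

Record Tensor := MkTensor { tensf :> Dual A -> Dual B -> K^o; tensP : tensf \in tensb }.
HB.instance Definition _ := [isSub for tensf].
HB.instance Definition _ := [Choice of Tensor by <:].
HB.instance Definition _ := [SubChoice_isSubLmodule of Tensor by <:].

Lemma tens_subproof (a : A) (b : B) :
  (fun (phi : Dual A) (psi : Dual B) => (phi a * psi b : K^o)) \in tensb.
Proof.
apply/asboolP; exists [:: (a, b)].
by apply/funext => phi; apply/funext => psi; rewrite big_seq1.
Qed.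
Definition tens (a : A) (b : B) : Tensor := MkTensor (tens_subproof a b).

End Tensor.

Section TensorFacts.
Variables (K : fieldType) (A B : lmodType K).

Lemma tensf_lin : linear (@tensf K A B).
Proof. move=> a u v. exact: (linearP (val : Tensor A B -> _)). Qed.

Lemma tev_lin (W : lmodType K) (D : VHom W (Tensor A B)) (phi : Dual A) (psi : Dual B) :
  linear (fun w => (D w : Dual A -> Dual B -> K^o) phi psi).
Proof.
move=> a x y /=; rewrite homlin tensf_lin.
by [].
Qed.
Definition tev (W : lmodType K) (D : VHom W (Tensor A B)) (phi : Dual A) (psi : Dual B)
  : Dual W := mkhom (tev_lin D phi psi).

End TensorFacts.

Section MoreHom.
Variables (K : fieldType).

Lemma homf_lin (U V : lmodType K) : linear (@homf K U V).
Proof. move=> a u v. exact: (linearP (val : VHom U V -> _)). Qed.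

(* the canonical isomorphism (A,(B,W)) ~= (B (x) A, W) :  F |-> the unique linear
   map h with h (b (x) a) = F a b *)
Definition tlift (A B W : lmodType K) (F : VHom A (VHom B W)) : VHom (Tensor B A) W :=
  epsilon (inhabits 0) (fun h : VHom (Tensor B A) W => forall a b, h (tens b a) = F a b).

Lemma scal_lin (A M : lmodType K) (e : Dual A) (m : M) : linear (fun c => e c *: m).
Proof. by move=> a x y /=; rewrite homD homZ scalerDl scalerA. Qed.
Definition scal_hom (A M : lmodType K) (e : Dual A) (m : M) : VHom A M :=
  mkhom (scal_lin e m).

Lemma post_lin (A U' U : lmodType K) (a : VHom U' U) : linear (fun g : VHom A U' => hcomp a g).
Proof.
move=> k g h; apply: val_inj; apply/funext => x /=.
change (a (homf (k *: g + h) x) = homf (k *: hcomp a g + hcomp a h) x).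
rewrite !homf_lin.
change (a (k *: g x + h x) = k *: a (g x) + a (h x)).
by rewrite homD homZ.
Qed.
Definition hpost (A U' U : lmodType K) (a : VHom U' U) : VHom (VHom A U') (VHom A U) :=
  mkhom (post_lin (A:=A) a).

End MoreHom.

Record coalgebra (K : fieldType) := Coalgebra {
  Ob : Type;
  Cm : Ob -> Ob -> lmodType K;
  delta : forall X Y Z : Ob, VHom (Cm X Z) (Tensor (Cm Y Z) (Cm X Y));
  eps : forall X : Ob, Dual (Cm X X) }.

Arguments Cm {K} c _ _.
Arguments delta {K} c X Y Z.
Arguments eps {K} c X.

(* Coassociativity and counit, evaluated against elementary tensors of
   linear forms (which separate the points of the tensor products).         *)
Definition is_coalgebra (K : fieldType) (C : coalgebra K) : Prop :=
  (forall (X Y Z W : Ob C) (c : Cm C X W)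
          (phi : Dual (Cm C Z W)) (psi : Dual (Cm C Y Z)) (chi : Dual (Cm C X Y)),
      (delta C X Y W c : _ -> _ -> _) (tev (delta C Y Z W) phi psi) chi
      = (delta C X Z W c : _ -> _ -> _) phi (tev (delta C X Y Z) psi chi)) /\
  (forall (X Y : Ob C) (c : Cm C X Y) (psi : Dual (Cm C X Y)),
      (delta C X Y Y c : _ -> _ -> _) (eps C Y) psi = psi c) /\
  (forall (X Y : Ob C) (c : Cm C X Y) (psi : Dual (Cm C X Y)),
      (delta C X X Y c : _ -> _ -> _) psi (eps C X) = psi c).

Record precontra (K : fieldType) (C : coalgebra K) := Precontra {
  cobj : Ob C -> lmodType K;
  cpi : forall X Y : Ob C, VHom (Cm C X Y) (cobj Y) -> cobj X }.

Arguments cobj {K C} p _.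
Arguments cpi {K C} p X Y.

Definition is_contramodule (K : fieldType) (C : coalgebra K) (M : precontra C) : Prop :=
  (forall X Y : Ob C, linear (cpi M X Y)) /\
  (forall (X Y Z : Ob C) (F : VHom (Cm C X Y) (VHom (Cm C Y Z) (cobj M Z)))
          (G : VHom (Cm C X Y) (cobj M Y)),
      (forall c, G c = cpi M Y Z (F c)) ->
      cpi M X Z (hcomp (tlift F) (delta C X Y Z)) = cpi M X Y G) /\
  (forall (X : Ob C) (m : cobj M X), cpi M X X (scal_hom (eps C X) m) = m).

Definition is_morph (K : fieldType) (C : coalgebra K) (M N : precontra C)
  (phi : forall X : Ob C, VHom (cobj M X) (cobj N X)) : Prop :=
  forall (X Y : Ob C) (f : VHom (Cm C X Y) (cobj M Y)),
    phi X (cpi M X Y f) = cpi N X Y (hcomp (phi Y) f).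

Definition Hcontra (K : fieldType) (C : coalgebra K) (X : Ob C) (U : lmodType K)
  : precontra C :=
  @Precontra K C (fun Y => VHom (Cm C Y X) U)
    (fun Y Z (F : VHom (Cm C Y Z) (VHom (Cm C Z X) U)) => hcomp (tlift F) (delta C Y Z X)).

Definition Hmap (K : fieldType) (C : coalgebra K) (X : Ob C) (U' U : lmodType K)
  (a : VHom U' U) : forall Y : Ob C, VHom (cobj (Hcontra X U') Y) (cobj (Hcontra X U) Y) :=
  fun Y => @hpost K (Cm C Y X) U' U a.

Arguments is_morph {K C} M N phi.

(* The left adjoint sends U to H_X^U = (C(-,X), U), with unit eta_U : u |-> eps_X(-) u in
   H_X^U(X).  A morphism phi : H_X^U -> M is determined by f = phi_X o eta_U: by the counit law
   every g in H_X^U(Y) equals pi(eta_U o g), hence phi_Y g = pi^M(f o g).  Conversely, for any f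
   the maps g |-> pi^M(f o g) form a morphism by the associativity of pi^M, and they restrict to
   f by the counit law of M.  That H_X^U is a contramodule at all is the coassociativity and
   counitality of C.

   Tensors are modelled as bilinear forms on pairs of linear forms, so the coalgebra axioms only
   speak about scalars.  Linear forms separate points (Zorn's lemma extends w |-> 1 to a linear
   form), and a finite sum of elementary tensors which vanishes against all forms is killed by
   every bilinear map; this yields both the universal property of the tensor product and the
   vector-valued forms of the coalgebra axioms. *)

From HB Require Import structures.
From mathcomp Require Import all_boot all_algebra.
From mathcomp Require Import boolp functions classical_sets.
From Stdlib Require Import ClassicalEpsilon.

Set Implicit Arguments.
Unset Strict Implicit.
Unset Printing Implicit Defensive.
Import GRing.Theory.
Local Open Scope ring_scope.

HB.instance Definition _ (K : fieldType) (U V : lmodType K) (f : VHom U V) :=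
  GRing.isLinear.Build K U V *:%R (homf f) (homlin f).

Section LinearGraphs.
Variables (K : fieldType) (V : lmodType K) (w : V).
Local Open Scope classical_set_scope.

Definition lin_graph (G : set (V * K)) :=
  [/\ G (w, 1), forall k p q, G p -> G q -> G (k *: p.1 + q.1, k * p.2 + q.2)
    & forall y, G (0, y) -> y = 0].

Lemma lin_graph0 G : lin_graph G -> G (0, 0).
Proof. by case=> Gw Gc _; have := Gc (-1) _ _ Gw Gw; rewrite /= scaleN1r mulN1r !addNr. Qed.

Lemma lin_graph_fun G v y y' : lin_graph G -> G (v, y) -> G (v, y') -> y = y'.
Proof.
case=> _ Gc G0 Gy Gy'; have := Gc (-1) _ _ Gy Gy'.
by rewrite /= scaleN1r mulN1r addNr => /G0/eqP; rewrite addrC subr_eq0 => /eqP.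
Qed.

Lemma lin_graph_line : w != 0 -> lin_graph [set p | p.1 = p.2 *: w].
Proof.
move=> w0; split=> /= [|k p q -> ->|y /esym/eqP]; first by rewrite scale1r.
  by rewrite scalerDl scalerA.
by rewrite scaler_eq0 (negbTE w0) orbF => /eqP.
Qed.

Lemma lin_graph_bigcup (F : set (set (V * K))) :
  (forall G, F G -> G = set0 \/ lin_graph G) -> total_on F subset ->
  \bigcup_(G in F) G = set0 \/ lin_graph (\bigcup_(G in F) G).
Proof.
move=> FP Ftot; set U := \bigcup_(G in F) G.
have [[G FG [p Gp]]|] := pselect (exists2 G, F G & G !=set0).
  have lin_of G' q : F G' -> G' q -> lin_graph G'.
    by move=> FG' G'q; case: (FP G' FG') => // G'0; rewrite G'0 in G'q.
  have common p1 p2 : U p1 -> U p2 -> exists2 G', F G' & G' p1 /\ G' p2.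
    move=> [G1 FG1 G1p] [G2 FG2 G2p].
    by case: (Ftot G1 G2 FG1 FG2) => [/(_ _ G1p)|/(_ _ G2p)]; [exists G2|exists G1].
  have [Gw _ _] := lin_of _ _ FG Gp.
  right; split=> [|k p1 p2 Up1 Up2|y [G' FG' G'y]]; first by exists G.
    have [G' FG' [G'p1 G'p2]] := common _ _ Up1 Up2.
    by have [_ Gc _] := lin_of _ _ FG' G'p1; exists G'; last exact: Gc.
  by have [_ _ G0] := lin_of _ _ FG' G'y; exact: G0.
move=> noF; left; apply/seteqP; split=> // p [G FG Gp].
by apply: noF; exists G => //; exists p.
Qed.

Definition extend_graph (G : set (V * K)) (v : V) :=
  [set q | exists p l, G p /\ q = (p.1 + l *: v, p.2)].

Lemma lin_graph_extend G v : lin_graph G -> ~ (exists y, G (v, y)) ->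
  G `<` extend_graph G v /\ lin_graph (extend_graph G v).
Proof.
move=> LG nv; have [Gw Gc G0] := LG.
split.
  split=> [p Gp|/(_ (v, 0)) Gv].
    by exists p, 0; rewrite scale0r addr0 -surjective_pairing.
  apply: nv; exists 0; apply: Gv; exists (0, 0), 1.
  by rewrite scale1r add0r; split => //; exact: lin_graph0 LG.
split=> [|k _ _ [p [l [Gp ->]]] [q [l' [Gq ->]]]|y [p [l [Gp [pv py]]]]].
- by exists (w, 1), 0; rewrite scale0r addr0.
- exists (k *: p.1 + q.1, k * p.2 + q.2), (k * l + l'); split; first exact: Gc.
  by congr (_, _); rewrite /= scalerDr scalerDl scalerA addrACA.
have [l0|ln0] := eqVneq l 0.
  apply: G0; rewrite py; move: pv; rewrite l0 scale0r addr0 => ->.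
  by rewrite -surjective_pairing.
exfalso; apply: nv; exists (- l^-1 * p.2).
have -> : v = - l^-1 *: p.1.
  apply: (scalerI ln0); rewrite scalerA mulrN mulrV ?unitfE // scaleN1r.
  by apply/eqP; rewrite -addr_eq0 addrC -pv.
by have := Gc (- l^-1) _ _ Gp (lin_graph0 LG); rewrite /= !addr0.
Qed.

Lemma exists_total_lin_graph : w != 0 ->
  exists2 G, lin_graph G & forall v, exists y, G (v, y).
Proof.
move=> w0; have [G [PG Gmax]] := Zorn_bigcup lin_graph_bigcup.
have LG : lin_graph G.
  case: PG => // G0; exfalso; apply: (Gmax _ _ (or_intror (lin_graph_line w0))).
  by rewrite G0; split=> // /(_ (0, 0)); apply; rewrite /= scale0r.
exists G => // v; apply: contrapT => nv.
by have [GG' LG'] := lin_graph_extend LG nv; exact: Gmax GG' (or_intror LG').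
Qed.

End LinearGraphs.

Lemma dual_exists_eq1 (K : fieldType) (V : lmodType K) (w : V) :
  w != 0 -> exists chi : Dual V, chi w = 1.
Proof.
move=> /exists_total_lin_graph [G LG Gtot].
pose f v := sval (cid (Gtot v)).
have fP v : G (v, f v) by exact: svalP (cid (Gtot v)).
have [Gw Gc _] := LG.
have f_lin : linear (f : V -> K^o).
  by move=> k u v; apply: (lin_graph_fun LG (fP _)); exact: Gc (fP u) (fP v).
by exists (mkhom f_lin); exact: lin_graph_fun LG (fP w) Gw.
Qed.

Lemma dual_separates (K : fieldType) (V : lmodType K) (u v : V) :
  (forall chi : Dual V, chi u = chi v) -> u = v.
Proof.
move=> eq_uv; apply/eqP; rewrite -subr_eq0; apply/negP => /negP /dual_exists_eq1 [chi].
by rewrite linearB /= eq_uv subrr => /eqP; rewrite eq_sym oner_eq0.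
Qed.

Section Homs.
Variable K : fieldType.
Implicit Types A B W : lmodType K.

Lemma hom_ext A B (f g : VHom A B) : (forall x, f x = g x) -> f = g.
Proof. by move=> fg; apply: val_inj; apply/funext => x; exact: fg. Qed.

Lemma hom_addE A B (f g : VHom A B) x : (f + g) x = f x + g x.
Proof. by []. Qed.

Lemma hom_scaleE A B k (f : VHom A B) x : (k *: f) x = k *: f x.
Proof. by []. Qed.

Lemma hcompA A B B' W (h : VHom B' W) (g : VHom B B') (f : VHom A B) :
  hcomp h (hcomp g f) = hcomp (hcomp h g) f.
Proof. exact: hom_ext. Qed.

Lemma hom_sumE A B I (r : seq I) (F : I -> VHom A B) x :
  (\sum_(i <- r) F i) x = \sum_(i <- r) F i x.
Proof. by elim/big_rec2: _ => // i y f _ <-. Qed.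

End Homs.

Section Tensors.
Variable K : fieldType.
Implicit Types A B W : lmodType K.

Lemma tensor_ext A B (t t' : Tensor A B) :
  (forall phi psi, t phi psi = t' phi psi) -> t = t'.
Proof. by move=> tt'; apply: val_inj; apply/funext => phi; apply/funext => psi; exact: tt'. Qed.

Lemma tensor_sumE A B I (r : seq I) (t : I -> Tensor A B) phi psi :
  (\sum_(i <- r) t i) phi psi = \sum_(i <- r) t i phi psi.
Proof. by elim/big_rec2: _ => // i y t' _ <-. Qed.

Lemma tensor_scaleE A B k (t : Tensor A B) phi psi : (k *: t) phi psi = k * t phi psi.
Proof. by []. Qed.

Definition tsum A B (s : seq (A * B)) : Tensor A B := \sum_(p <- s) tens p.1 p.2.

Lemma tsumE A B (s : seq (A * B)) phi psi :
  tsum s phi psi = \sum_(p <- s) phi p.1 * psi p.2.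
Proof. exact: tensor_sumE. Qed.

Lemma tsum_surj A B (t : Tensor A B) : exists s, tsum s = t.
Proof.
have /asboolP [s tE] := tensP t; exists s; apply: tensor_ext => phi psi.
by rewrite tsumE tE.
Qed.

Definition trep A B (t : Tensor A B) : seq (A * B) := sval (cid (tsum_surj t)).

Lemma trepK A B (t : Tensor A B) : tsum (trep t) = t.
Proof. exact: svalP (cid (tsum_surj t)). Qed.

Lemma trepE A B (t : Tensor A B) phi psi :
  t phi psi = \sum_(p <- trep t) phi p.1 * psi p.2.
Proof. by rewrite -tsumE trepK. Qed.

Lemma tsum_cat A B (s s' : seq (A * B)) : tsum (s ++ s') = tsum s + tsum s'.
Proof. exact: big_cat. Qed.

Lemma scale_tsum A B k (s : seq (A * B)) :
  k *: tsum s = tsum [seq (k *: p.1, p.2) | p <- s].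
Proof.
apply: tensor_ext => phi psi; rewrite tsumE big_map.
rewrite -[LHS]/(k * tsum s phi psi) tsumE mulr_sumr.
by apply: eq_bigr => p _; rewrite homZ mulrA.
Qed.

Lemma tsum_slice A B (s : seq (B * A)) (phi : Dual A) (psi : Dual B) :
  psi (\sum_(p <- s) phi p.2 *: p.1) = tsum s psi phi.
Proof. by rewrite tsumE linear_sum; apply: eq_bigr => p _; rewrite linearZ /= mulrC. Qed.

(* If a0 != 0, a form phi0 with phi0 a0 = 1 gives b0 = - \sum phi0 a_i *: b_i, and replacing
   each a_i by a_i - phi0 a_i *: a0 absorbs the head pair (b0, a0). *)
Lemma hom2_sum_eq0 A B W (F : VHom A (VHom B W)) (s : seq (B * A)) :
  (forall phi : Dual A, \sum_(p <- s) phi p.2 *: p.1 = 0) ->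
  \sum_(p <- s) F p.2 p.1 = 0.
Proof.
have [n] := ubnP (size s); elim: n s => // n IH [|[b0 a0] s] /= /ltnSE size_s null_s.
  by rewrite big_nil.
have {}null_s (phi : Dual A) : phi a0 *: b0 + \sum_(p <- s) phi p.2 *: p.1 = 0.
  by have := null_s phi; rewrite big_cons.
rewrite big_cons /=; have [a0_eq0|a0_neq0] := eqVneq a0 0.
  subst a0; rewrite hom0 add0r; apply: IH => // phi.
  by have := null_s phi; rewrite hom0 scale0r add0r.
have [phi0 phi0_a0] := dual_exists_eq1 a0_neq0.
have b0E : \sum_(p <- s) phi0 p.2 *: p.1 = - b0.
  by apply/eqP; rewrite -addr_eq0 addrC -[b0]scale1r -phi0_a0 null_s.
pose s' := [seq (p.1, p.2 - phi0 p.2 *: a0) | p <- s].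
have null_s' (phi : Dual A) : \sum_(p <- s') phi p.2 *: p.1 = 0.
  have phi_sub p :
      phi (p.2 - phi0 p.2 *: a0) *: p.1 = phi p.2 *: p.1 - phi a0 *: (phi0 p.2 *: p.1).
    by rewrite linearB linearZ /= scalerBl scalerA mulrC.
  rewrite big_map /=; under eq_bigr do rewrite phi_sub.
  by rewrite sumrB -scaler_sumr b0E scalerN opprK addrC null_s.
have F_sub p : F (p.2 - phi0 p.2 *: a0) p.1 = F p.2 p.1 - F a0 (phi0 p.2 *: p.1).
  by rewrite linearB linearZ /= [in RHS]linearZ.
rewrite -[RHS](IH s') ?size_map // big_map /=.
under [RHS]eq_bigr do rewrite F_sub.
by rewrite sumrB -linear_sum /= b0E linearN /= opprK addrC.
Qed.

Lemma hom2_sum_eq A B W (F : VHom A (VHom B W)) (s s' : seq (B * A)) :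
  (forall phi : Dual A, \sum_(p <- s) phi p.2 *: p.1 = \sum_(p <- s') phi p.2 *: p.1) ->
  \sum_(p <- s) F p.2 p.1 = \sum_(p <- s') F p.2 p.1.
Proof.
move=> slices; apply/eqP; rewrite -subr_eq0; apply/eqP.
pose s'N := [seq (- p.1, p.2) | p <- s'].
have sumN (V : zmodType) (G : B -> A -> V) : (forall a, {morph G^~ a : b / - b}) ->
    \sum_(p <- s'N) G p.1 p.2 = - \sum_(p <- s') G p.1 p.2.
  by move=> GN; rewrite big_map -sumrN; apply: eq_bigr => p _; rewrite /= GN.
rewrite -(sumN _ (fun b a => F a b)) => [|a b]; last exact: linearN.
rewrite -big_cat; apply: hom2_sum_eq0 => phi.
rewrite big_cat /= (sumN _ (fun b a => phi a *: b)) ?slices ?subrr // => a b.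
exact: scalerN.
Qed.

Lemma tlift_tens A B W (F : VHom A (VHom B W)) a b : tlift F (tens b a) = F a b.
Proof.
rewrite /tlift; set P := (fun h : VHom (Tensor B A) W => _).
suff [h hP] : exists h, P h by have := epsilon_spec (inhabits 0) P (ex_intro _ h hP); apply.
pose h t := \sum_(p <- trep t) F p.2 p.1.
have h_tsum s : h (tsum s) = \sum_(p <- s) F p.2 p.1.
  apply: hom2_sum_eq => phi; apply: (@dual_separates K) => psi.
  by rewrite !tsum_slice trepK.
have h_lin : linear h.
  move=> k t t'; rewrite -(trepK t) -(trepK t') scale_tsum -tsum_cat !h_tsum.
  by rewrite big_cat big_map scaler_sumr; congr (_ + _); apply: eq_bigr => p _; rewrite linearZ.
by exists (mkhom h_lin) => a' b'; have := h_tsum [:: (b', a')]; rewrite /tsum !big_seq1.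
Qed.

Lemma tlift_tsum A B W (F : VHom A (VHom B W)) s :
  tlift F (tsum s) = \sum_(p <- s) F p.2 p.1.
Proof. by rewrite linear_sum; apply: eq_bigr => p _; rewrite /= tlift_tens. Qed.

Lemma tlift_lin A B W : linear (@tlift K A B W : VHom A (VHom B W) -> VHom (Tensor B A) W).
Proof.
move=> k F G; apply: hom_ext => t; rewrite -(trepK t).
transitivity (k *: tlift F (tsum (trep t)) + tlift G (tsum (trep t))); last by [].
by rewrite !tlift_tsum scaler_sumr -big_split.
Qed.

Definition tlift_hom A B W : VHom (VHom A (VHom B W)) (VHom (Tensor B A) W) :=
  mkhom (@tlift_lin A B W).

Lemma hcomp_tlift A B W W' (f : VHom W W') (F : VHom A (VHom B W)) :
  hcomp f (tlift F) = tlift (hcomp (hpost B f) F).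
Proof.
apply: hom_ext => t; rewrite -(trepK t) /= !tlift_tsum linear_sum.
by apply: eq_bigr.
Qed.

End Tensors.

Section CoalgebraSums.
Variables (K : fieldType) (C : coalgebra K).
Hypothesis HC : is_coalgebra C.

Lemma counitl_sum (Y X : Ob C) (U : lmodType K) (f : VHom (Cm C Y X) U) c :
  \sum_(p <- trep (delta C Y Y X c)) eps C Y p.2 *: f p.1 = f c.
Proof.
apply: (@dual_separates K) => om; have [_ [_ counit]] := HC.
rewrite -[RHS]/(hcomp om f c) -counit trepE linear_sum.
by apply: eq_bigr => p _; rewrite /= linearZ /= mulrC.
Qed.

Lemma counitr_sum (Y X : Ob C) (U : lmodType K) (f : VHom (Cm C Y X) U) c :
  \sum_(p <- trep (delta C Y X X c)) eps C X p.1 *: f p.2 = f c.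
Proof.
apply: (@dual_separates K) => om; have [_ [counit _]] := HC.
rewrite -[RHS]/(hcomp om f c) -counit trepE linear_sum.
by apply: eq_bigr => p _; rewrite /= linearZ.
Qed.

Lemma coassoc_slice (P Q R X : Ob C) (c : Cm C P X) (chi : Dual (Cm C P Q)) :
  \sum_(p <- trep (delta C P R X c)) \sum_(q <- trep (delta C P Q R p.2))
     (chi q.2 : K) *: tens p.1 q.1
  = \sum_(p <- trep (delta C P Q X c)) (chi p.2 : K) *: delta C Q R X p.1.
Proof.
apply: tensor_ext => phi psi; rewrite !tensor_sumE.
have := HC.1 P Q R X c phi psi chi; rewrite !trepE => coassoc.
transitivity (\sum_(p <- trep (delta C P R X c)) phi p.1 * tev (delta C P Q R) psi chi p.2).
  apply: eq_bigr => p _; rewrite tensor_sumE [RHS]/= (trepE (delta C P Q R p.2)) mulr_sumr.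
  by apply: eq_bigr => q _; rewrite tensor_scaleE /= mulrCA [chi q.2 * _]mulrC.
by rewrite -coassoc; apply: eq_bigr => p _; rewrite tensor_scaleE /= mulrC.
Qed.

Lemma coassoc_sum (P Q R X : Ob C) (U : lmodType K)
    (F : VHom (Cm C P Q) (VHom (Cm C Q R) (VHom (Cm C R X) U))) (c : Cm C P X) :
  \sum_(p <- trep (delta C P R X c)) tlift F (delta C P Q R p.2) p.1
  = \sum_(p <- trep (delta C P Q X c)) tlift (F p.2) (delta C Q R X p.1).
Proof.
pose Ft := hcomp (tlift_hom _ _ _) F.
pose L1 := flatten [seq [seq (tens p.1 q.1, q.2) | q <- trep (delta C P Q R p.2)]
                   | p <- trep (delta C P R X c)].
pose L2 := [seq (delta C Q R X p.1, p.2) | p <- trep (delta C P Q X c)].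
transitivity (\sum_(q <- L1) Ft q.2 q.1).
  rewrite big_flatten big_map; apply: eq_bigr => p _.
  rewrite -{1}(trepK (delta C P Q R p.2)) tlift_tsum hom_sumE big_map.
  by apply: eq_bigr => q _; rewrite /= tlift_tens.
transitivity (\sum_(q <- L2) Ft q.2 q.1); last by rewrite big_map.
apply: hom2_sum_eq => chi.
by rewrite big_flatten !big_map -coassoc_slice; apply: eq_bigr => p _; rewrite big_map.
Qed.

End CoalgebraSums.

Section CofreeContramodule.
Variables (K : fieldType) (C : coalgebra K) (X : Ob C).
Hypothesis HC : is_coalgebra C.

Lemma Hcontra_lin (U : lmodType K) (Y Z : Ob C) : linear (cpi (Hcontra X U) Y Z).
Proof. by move=> k F G; apply: hom_ext => c /=; rewrite tlift_lin. Qed.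

Lemma Hcontra_assoc (U : lmodType K) (P Q R : Ob C)
    (F : VHom (Cm C P Q) (VHom (Cm C Q R) (cobj (Hcontra X U) R)))
    (G : VHom (Cm C P Q) (cobj (Hcontra X U) Q)) :
  (forall c, G c = cpi (Hcontra X U) Q R (F c)) ->
  cpi (Hcontra X U) P R (hcomp (tlift F) (delta C P Q R)) = cpi (Hcontra X U) P Q G.
Proof.
move=> GE; apply: hom_ext => c /=.
rewrite -(trepK (delta C P R X c)) -(trepK (delta C P Q X c)) !tlift_tsum.
under [RHS]eq_bigr do rewrite GE.
exact: coassoc_sum.
Qed.

Lemma Hcontra_counit (U : lmodType K) (Y : Ob C) (g : cobj (Hcontra X U) Y) :
  cpi (Hcontra X U) Y Y (scal_hom (eps C Y) g) = g.
Proof.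
by apply: hom_ext => c /=; rewrite -(trepK (delta C Y Y X c)) tlift_tsum counitl_sum.
Qed.

Lemma Hcontra_is_contramodule (U : lmodType K) : is_contramodule (Hcontra X U).
Proof.
by split; [exact: Hcontra_lin | split; [exact: Hcontra_assoc | exact: Hcontra_counit]].
Qed.

Lemma Hmap_is_morph (U' U : lmodType K) (a : VHom U' U) :
  is_morph (Hcontra X U') (Hcontra X U) (Hmap X a).
Proof. by move=> Y Z f; apply: hom_ext => c /=; rewrite -hcomp_tlift. Qed.

Lemma Hunit_lin (U : lmodType K) : linear (fun u : U => scal_hom (eps C X) u).
Proof.
move=> k u v; apply: (@hom_ext _ (Cm C X X)) => c.
by rewrite hom_addE hom_scaleE /= scalerDr !scalerA mulrC.
Qed.

Definition Hunit (U : lmodType K) : VHom U (cobj (Hcontra X U) X) := mkhom (@Hunit_lin U).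

Lemma Hunit_gen (U : lmodType K) (Y : Ob C) (g : cobj (Hcontra X U) Y) :
  g = cpi (Hcontra X U) Y X (hcomp (Hunit U) g).
Proof.
by apply: hom_ext => c /=; rewrite -(trepK (delta C Y X X c)) tlift_tsum counitr_sum.
Qed.

Definition Htranspose (U : lmodType K) (M : precontra C)
    (phi : forall Y, VHom (cobj (Hcontra X U) Y) (cobj M Y)) : VHom U (cobj M X) :=
  hcomp (phi X) (Hunit U).

Lemma morph_HcontraE (U : lmodType K) (M : precontra C) phi :
  is_morph (Hcontra X U) M phi ->
  forall Y g, phi Y g = cpi M Y X (hcomp (Htranspose phi) g).
Proof. by move=> phi_morph Y g; rewrite {1}(Hunit_gen g) phi_morph hcompA. Qed.

Lemma Htranspose_inj (U : lmodType K) (M : precontra C) phi phi' :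
  is_morph (Hcontra X U) M phi -> is_morph (Hcontra X U) M phi' ->
  Htranspose phi = Htranspose phi' -> phi = phi'.
Proof.
move=> phi_morph phi'_morph eq_phi; apply: functional_extensionality_dep => Y.
by apply: hom_ext => g; rewrite !morph_HcontraE // eq_phi.
Qed.

Section Extension.
Variables (U : lmodType K) (M : precontra C) (f : VHom U (cobj M X)).
Hypothesis M_contra : is_contramodule M.

Lemma Hextend_lin (Y : Ob C) :
  linear (fun g : cobj (Hcontra X U) Y => cpi M Y X (hcomp f g)).
Proof.
move=> k g g'; rewrite -M_contra.1; congr (cpi M Y X _).
by apply: hom_ext => c /=; rewrite linearP.
Qed.

Definition Hextend Y : VHom (cobj (Hcontra X U) Y) (cobj M Y) := mkhom (@Hextend_lin Y).

Lemma Hextend_is_morph : is_morph (Hcontra X U) M Hextend.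
Proof.
move=> Y Z F /=; have [_ [M_assoc _]] := M_contra.
rewrite -(M_assoc Y Z X (hcomp (hpost _ f) F) (hcomp (Hextend Z) F) (fun c => erefl)).
by congr (cpi M Y X _); rewrite hcompA hcomp_tlift.
Qed.

Lemma Htranspose_extend : Htranspose Hextend = f.
Proof.
apply: hom_ext => u /=; have [_ [_ M_counit]] := M_contra.
rewrite -[RHS]M_counit; congr (cpi M X X _).
by apply: hom_ext => c /=; rewrite linearZ.
Qed.

End Extension.

Lemma Htranspose_natural (U' U : lmodType K) (a : VHom U' U) (M N : precontra C)
    (phi : forall Y, VHom (cobj (Hcontra X U) Y) (cobj M Y))
    (psi : forall Y, VHom (cobj M Y) (cobj N Y)) :
  Htranspose (fun Y => hcomp (psi Y) (hcomp (phi Y) (Hmap X a Y)))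
  = hcomp (psi X) (hcomp (Htranspose phi) a).
Proof.
apply: hom_ext => u /=; congr (psi X (phi X _)).
by apply: hom_ext => c /=; rewrite linearZ.
Qed.

End CofreeContramodule.

Theorem proposition3p3 (K : fieldType) (C : coalgebra K) (HC : is_coalgebra C)
    (X : Ob C) :
  (* H_X is a functor Vect_K -> ^C Ctr *)
  (forall U : lmodType K, is_contramodule (Hcontra X U)) /\
  (forall (U' U : lmodType K) (a : VHom U' U),
      is_morph (Hcontra X U') (Hcontra X U) (Hmap X a)) /\
  (* natural bijections  ^C Ctr(H_X^U, M) ~= Vect_K(U, M(X)) *)
  exists Phi : forall (U : lmodType K) (M : precontra C),
      (forall Y : Ob C, VHom (cobj (Hcontra X U) Y) (cobj M Y)) -> VHom U (cobj M X),
    (forall (U : lmodType K) (M : precontra C), is_contramodule M ->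
       (forall phi phi', is_morph (Hcontra X U) M phi -> is_morph (Hcontra X U) M phi' ->
          Phi U M phi = Phi U M phi' -> phi = phi') /\
       (forall f : VHom U (cobj M X),
          exists phi, is_morph (Hcontra X U) M phi /\ Phi U M phi = f)) /\
    (forall (U' U : lmodType K) (a : VHom U' U) (M N : precontra C)
        (phi : forall Y : Ob C, VHom (cobj (Hcontra X U) Y) (cobj M Y))
        (psi : forall Y : Ob C, VHom (cobj M Y) (cobj N Y)),
       is_contramodule M -> is_contramodule N ->
       is_morph (Hcontra X U) M phi -> is_morph M N psi ->
       Phi U' N (fun Y => hcomp (psi Y) (hcomp (phi Y) (Hmap X a Y)))
         = hcomp (psi X) (hcomp (Phi U M phi) a)).
Proof.
split; first exact: Hcontra_is_contramodule.
split; first exact: Hmap_is_morph.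
exists (@Htranspose K C X); split=> [U M M_contra|U' U a M N phi psi *].
  split=> [phi phi'|f]; first exact: Htranspose_inj.
  by exists (Hextend f M_contra); split; [exact: Hextend_is_morph | exact: Htranspose_extend].
exact: Htranspose_natural.
Qed.
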